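(* Let $n$ be a positive integer, let $\mathcal F$ be an $\mathcal N$-saturated family of subsets of $[n]$, and let $\mathcal G$ be a component of $\mathcal F$. Let $B_1,\dots,B_l$ be the minimal elements and $A_1,\dots,A_k$ the maximal elements of $\mathcal G$. Let $M\in\mathcal F$ be such that $\bigcup_{i=1}^l B_i\subseteq M\subseteq\bigcap_{i=1}^k A_i$, and such that $M$ is maximal (with respect to inclusion) among the sets of $\mathcal F$ with this property. Then every $X\in\mathcal G$ is comparable to $M$.
   Context: The poset $\mathcal N$ has four elements $a,b,c,d$ with $a<c$, $b<c$, $b<d$ and no other comparabilities. A family $\mathcal Q$ of sets (ordered by inclusion) contains an induced copy of $\mathcal N$ if there are distinct sets in $\mathcal Q$ whose inclusion relations are exactly those of $a,b,c,d$ above. A family $\mathcal F$ of subsets of $[n]=\{1,\dots,n\}$ is $\mathcal N$-saturated if $\mathcal F$ contains no induced copy of $\mathcal N$, but for every $S\subseteq[n]$ with $S\notin\mathcal F$, the family $\mathcal F\cup\{S\}$ contains an induced copy of $\mathcal N$. A component of $\mathcal F$ is the vertex set of a connected component of the Hasse diagram (as a graph) of the poset $(\mathcal F\setminus\{\emptyset,[n]\},\subseteq)$; its minimal and maximal elements are taken with respect to inclusion within the component. *)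

(* Subsets of [n] = {1..n} are modelled as {set 'I_n}. *)
From mathcomp Require Import all_boot.
Set Implicit Arguments. Unset Strict Implicit. Unset Printing Implicit Defensive.

Section NSat.
Variable n : nat.
Notation sT := {set 'I_n}.

Definition set_comparable (X Y : sT) : bool := (X \subset Y) || (Y \subset X).

Definition contains_induced_N (Q : {set sT}) : Prop :=
  exists a b c d : sT,
    [/\ [/\ a \in Q, b \in Q, c \in Q & d \in Q],
        uniq [:: a; b; c; d],
        [/\ a \proper c, b \proper c & b \proper d] &
        [/\ ~~ set_comparable a b, ~~ set_comparable a d & ~~ set_comparable c d]].

Definition N_saturated (F : {set sT}) : Prop :=
  ~ contains_induced_N F /\
  forall S : sT, S \notin F -> contains_induced_N (S |: F).

Definition inner (F : {set sT}) : {set sT} := F :\: [set set0; setT].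

Definition covers (P : {set sT}) (X Y : sT) : bool :=
  [&& X \in P, Y \in P, X \proper Y &
      ~~ [exists Z in P, (X \proper Z) && (Z \proper Y)]].

Definition hasse (F : {set sT}) : rel sT :=
  fun X Y => covers (inner F) X Y || covers (inner F) Y X.

Definition is_component (F G : {set sT}) : Prop :=
  exists2 X0, X0 \in inner F & G = [set Y | connect (hasse F) X0 Y].

Definition minimal_in (G : {set sT}) (X : sT) : bool :=
  (X \in G) && ~~ [exists Y in G, Y \proper X].
Definition maximal_in (G : {set sT}) (X : sT) : bool :=
  (X \in G) && ~~ [exists Y in G, X \proper Y].

Definition between (G : {set sT}) (M : sT) : bool :=
  ((\bigcup_(B | minimal_in G B) B) \subset M) &&
  (M \subset \bigcap_(A | maximal_in G A) A).

End NSat.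

From mathcomp Require Import all_boot zify.

(* Let V be the union of all members of F lying between the minimal and the
   maximal elements of G.  A set X of G incomparable to M lies itself between:
   otherwise a minimal (resp. maximal) element of G, M and X form an induced N.
   Hence X is contained in V, and it suffices to show that V belongs to F, for
   then V = M by the maximality of M.  If V were not in F, saturation would
   give an induced N in V |: F passing through V.  V cannot be a lower vertex:
   each member T of the union either replaces V in a copy of N inside F or lies
   below a fixed vertex incomparable to V, so V would lie below that vertex.
   If V is an upper vertex, some lower vertex incomparable to V lies below
   every maximal element of G, hence belongs to G (components are down-closed
   within F \ {set0, setT}), hence lies in V. *)

Set Implicit Arguments. Unset Strict Implicit. Unset Printing Implicit Defensive.

Section NSaturated.
Variable n : nat.
Local Notation sT := {set 'I_n}.
Implicit Types (Q F G : {set sT}) (S T X Y Z A B M a b c d : sT).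

Lemma set_comparableC X Y : set_comparable X Y = set_comparable Y X.
Proof. by rewrite /set_comparable orbC. Qed.

Lemma incomparableP X Y :
  reflect (~~ (X \subset Y) /\ ~~ (Y \subset X)) (~~ set_comparable X Y).
Proof. by rewrite /set_comparable negb_or; apply: andP. Qed.

Lemma incomparable_neq X Y : ~~ set_comparable X Y -> X != Y.
Proof. by apply: contraNneq => ->; rewrite /set_comparable subxx. Qed.

Definition N_shape a b c d : Prop :=
  [/\ a \proper c, b \proper c, b \proper d &
      [/\ ~~ set_comparable a b, ~~ set_comparable a d & ~~ set_comparable c d]].

Lemma N_shape_induced Q a b c d :
  a \in Q -> b \in Q -> c \in Q -> d \in Q -> N_shape a b c d ->
  contains_induced_N Q.
Proof.
move=> aQ bQ cQ dQ [ac bc bd [ab ad cd]].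
have uniq_abcd : uniq [:: a; b; c; d].
  rewrite /= !inE !negb_or (proper_neq ac) (proper_neq bc) (proper_neq bd).
  by rewrite (incomparable_neq ab) (incomparable_neq ad) (incomparable_neq cd).
by exists a, b, c, d; split; try split.
Qed.

Lemma minimal_in_minset G B : minimal_in G B = minset (mem G) B.
Proof.
apply/andP/minsetP => [[BG /existsPn noZ] | [BG minB]]; split => //.
  move=> Z ZG ZB; apply/eqP; apply: contraR (noZ Z) => neqZB.
  by apply/andP; split; rewrite // properEneq neqZB.
apply/existsPn => Z; apply/negP => /andP[ZG ZB].
have eqZB := minB Z ZG (proper_sub ZB).
by rewrite eqZB properxx in ZB.
Qed.

Lemma maximal_in_maxset G A : maximal_in G A = maxset (mem G) A.
Proof.
apply/andP/maxsetP => [[AG /existsPn noZ] | [AG maxA]]; split => //.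
  move=> Z ZG AZ; apply/eqP; apply: contraR (noZ Z) => neqZA.
  by apply/andP; split; rewrite // properEneq eq_sym neqZA.
apply/existsPn => Z; apply/negP => /andP[ZG AZ].
have eqZA := maxA Z ZG (proper_sub AZ).
by rewrite eqZA properxx in AZ.
Qed.

Lemma minimal_in_mem G B : minimal_in G B -> B \in G.
Proof. by case/andP. Qed.

Lemma maximal_in_mem G A : maximal_in G A -> A \in G.
Proof. by case/andP. Qed.

Lemma minimal_in_eq G B Z : minimal_in G B -> Z \in G -> Z \subset B -> Z = B.
Proof. by rewrite minimal_in_minset; apply: minsetinf. Qed.

Lemma maximal_in_eq G A Z : maximal_in G A -> Z \in G -> A \subset Z -> Z = A.
Proof. by rewrite maximal_in_maxset; apply: maxsetsup. Qed.

Lemma minimal_in_sub G X : X \in G -> exists2 B, minimal_in G B & B \subset X.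
Proof. by case/minset_exists => B; exists B; rewrite ?minimal_in_minset. Qed.

Lemma maximal_in_sup G X : X \in G -> exists2 A, maximal_in G A & X \subset A.
Proof. by case/maxset_exists => A; exists A; rewrite ?maximal_in_maxset. Qed.

Lemma minimal_in_incomparable G B B' :
  minimal_in G B -> minimal_in G B' -> B != B' -> ~~ set_comparable B B'.
Proof.
move=> mB mB' neqBB'; apply/incomparableP; split; apply: contra neqBB' => sub.
  by rewrite (minimal_in_eq mB' (minimal_in_mem mB) sub).
by rewrite (minimal_in_eq mB (minimal_in_mem mB') sub).
Qed.

Lemma maximal_in_incomparable G A A' :
  maximal_in G A -> maximal_in G A' -> A != A' -> ~~ set_comparable A A'.
Proof.
move=> mA mA' neqAA'; apply/incomparableP; split; apply: contra neqAA' => sub.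
  by rewrite (maximal_in_eq mA (maximal_in_mem mA') sub).
by rewrite (maximal_in_eq mA' (maximal_in_mem mA) sub).
Qed.

Lemma betweenP G T :
  reflect ((forall B, minimal_in G B -> B \subset T) /\
           (forall A, maximal_in G A -> T \subset A)) (between G T).
Proof.
by apply: (iffP andP) => -[sBT sTA]; split; try exact/bigcupsP; exact/bigcapsP.
Qed.

Lemma induced_N_setU1 Q S :
  ~ contains_induced_N Q -> contains_induced_N (S |: Q) ->
  [\/ exists b c d, [/\ b \in Q, c \in Q & d \in Q] /\ N_shape S b c d,
      exists a c d, [/\ a \in Q, c \in Q & d \in Q] /\ N_shape a S c d,
      exists a b d, [/\ a \in Q, b \in Q & d \in Q] /\ N_shape a b S d |
      exists a b c, [/\ a \in Q, b \in Q & c \in Q] /\ N_shape a b c S].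
Proof.
move=> noN [a [b [c [d [[aQ bQ cQ dQ] uniq_abcd [ac bc bd] incs]]]]].
have shape : N_shape a b c d by [].
have memQ X : X \in S |: Q -> X != S -> X \in Q.
  by rewrite in_setU1 => /orP[/eqP-> | //]; rewrite eqxx.
move: uniq_abcd; rewrite /= !inE !negb_or.
case/and4P => /and3P[nab nac nad] /andP[nbc nbd] ncd _.
have [eaS | aS] := eqVneq a S.
  subst S; constructor 1; exists b, c, d; split=> //.
  by split; apply: memQ; rewrite // eq_sym.
have [ebS | bS] := eqVneq b S.
  subst S; constructor 2; exists a, c, d; split=> //.
  by split; apply: memQ; rewrite // eq_sym.
have [ecS | cS] := eqVneq c S.
  subst S; constructor 3; exists a, b, d; split=> //.
  by split; apply: memQ; rewrite // eq_sym.
have [edS | dS] := eqVneq d S.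
  subst S; constructor 4; exists a, b, c; split=> //.
  by split; apply: memQ; rewrite // eq_sym.
have [aQ' bQ'] := (memQ _ aQ aS, memQ _ bQ bS).
have [cQ' dQ'] := (memQ _ cQ cS, memQ _ dQ dS).
by case: noN; apply: (N_shape_induced aQ' bQ' cQ' dQ').
Qed.

Section UnionOfMembers.
Variables (F : {set sT}) (P : pred sT).
Hypotheses (noN : ~ contains_induced_N F) (sPF : forall T, P T -> T \in F).
Local Notation V := (\bigcup_(T | P T) T).

Lemma union_not_N_a b c d : b \in F -> c \in F -> d \in F -> ~ N_shape V b c d.
Proof.
move=> bF cF dF [Vc bc bd [/incomparableP[Vb bV] /incomparableP[Vd dV] cd]].
suff: V \subset d by rewrite (negbTE Vd).
apply/bigcupsP => T PT; have TV : T \subset V := bigcup_sup T PT.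
have [Tb | Tb] := boolP (T \subset b); first exact: subset_trans Tb (proper_sub bd).
apply/negPn/negP => Td; apply: noN.
apply: (N_shape_induced (sPF PT) bF cF dF); split => //.
  exact: sub_proper_trans TV Vc.
split => //; apply/incomparableP; split => //.
  by apply: contra bV => bT; apply: subset_trans bT TV.
by apply: contra dV => dT; apply: subset_trans dT TV.
Qed.

Lemma union_not_N_b a c d : a \in F -> c \in F -> d \in F -> ~ N_shape a V c d.
Proof.
move=> aF cF dF [ac Vc Vd [/incomparableP[aV Va] ad cd]].
suff: V \subset a by rewrite (negbTE Va).
apply/bigcupsP => T PT; have TV : T \subset V := bigcup_sup T PT.
apply/negPn/negP => Ta; apply: noN.
apply: (N_shape_induced aF (sPF PT) cF dF); split => //.
- exact: sub_proper_trans TV Vc.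
- exact: sub_proper_trans TV Vd.
split => //; apply/incomparableP; split => //.
by apply: contra aV => aT; apply: subset_trans aT TV.
Qed.

End UnionOfMembers.

Lemma in_inner F X : (X \in inner F) = [&& X \in F, X != set0 & X != setT].
Proof. by rewrite !inE negb_or andbC andbA. Qed.

Lemma hasse_sym F : symmetric (hasse F).
Proof. by move=> X Y; rewrite /hasse orbC. Qed.

Lemma connect_hasse_proper F X Y :
  X \in inner F -> Y \in inner F -> X \proper Y -> connect (hasse F) X Y.
Proof.
have [k] := ubnP (#|Y| - #|X|); elim: k X Y => // k IH X Y ltYX XF YF XY.
have [covXY | ] := boolP (covers (inner F) X Y).
  by apply: connect1; rewrite /hasse covXY.
rewrite /covers XF YF XY negbK => /existsP[Z /and3P[ZF XZ ZY]].
have [ltXZ ltZY] := (proper_card XZ, proper_card ZY).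
by apply: connect_trans (IH X Z _ XF ZF XZ) (IH Z Y _ ZF YF ZY); lia.
Qed.

Section Component.
Variables F G : {set sT}.
Hypothesis compG : is_component F G.

Lemma component_inner X : X \in G -> X \in inner F.
Proof.
have hasse_inner Y Z : hasse F Y Z -> Z \in inner F by case/orP => /and4P[].
case: compG => X0 X0F ->; rewrite inE => /connectP[p pathp ->].
elim: p X0 X0F pathp => //= Y p IH X0 _ /andP[/hasse_inner YF]; exact: IH.
Qed.

Lemma component_sub X : X \in G -> X \in F.
Proof. by move/component_inner; rewrite in_inner => /and3P[]. Qed.

Lemma component_down_closed X Y :
  Y \in G -> X \in inner F -> X \subset Y -> X \in G.
Proof.
move=> YG XF XY; have [-> // | neqXY] := eqVneq X Y.
have connXY : connect (hasse F) X Y.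
  apply: connect_hasse_proper XF (component_inner YG) _.
  by rewrite properEneq neqXY.
move: YG; case: compG => X0 _ -> ; rewrite !inE => connX0Y.
by apply: connect_trans connX0Y _; rewrite (sym_connect_sym (@hasse_sym F)).
Qed.

Lemma component_mem X Y : X \in F -> X != set0 -> Y \in G -> X \subset Y -> X \in G.
Proof.
move=> XF X0 YG XY; apply: (component_down_closed YG _ XY).
rewrite in_inner XF X0; apply: contraTneq (component_inner YG) => XT.
have /eqP-> : Y == setT by rewrite -subTset -XT.
by rewrite in_inner eqxx !andbF.
Qed.

Lemma component_maximal : exists A, maximal_in G A.
Proof.
case: compG => X0 _ GE; have X0G : X0 \in G by rewrite GE inE connect0.
by have [A mA _] := maximal_in_sup X0G; exists A.
Qed.

End Component.

Definition between_union F G : sT := \bigcup_(T in F | between G T) T.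

Lemma sub_between_union F G T : T \in F -> between G T -> T \subset between_union F G.
Proof. by move=> TF bT; apply: bigcup_sup; rewrite TF. Qed.

Lemma between_union_sub_maximal F G A : maximal_in G A -> between_union F G \subset A.
Proof. by move=> mA; apply/bigcupsP => T /andP[_ /betweenP[_]]; apply. Qed.

Section Saturated.
Variables (F G : {set sT}) (M : sT).
Hypotheses (noN : ~ contains_induced_N F) (compG : is_component F G).
Hypotheses (MF : M \in F) (bM : between G M).
Local Notation V := (between_union F G).

Lemma incomparable_minimal_sub X B' :
  X \in G -> ~~ set_comparable X M -> minimal_in G B' -> B' \subset X.
Proof.
move=> XG incXM mB'; apply/negPn/negP => B'X; apply: noN.
have [B mB BX] := minimal_in_sub XG.
have [BG B'G] := (minimal_in_mem mB, minimal_in_mem mB').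
case/betweenP: (bM) => subM _; have [BM B'M] := (subM B mB, subM B' mB').
have incBB' : ~~ set_comparable B B'.
  by apply: minimal_in_incomparable mB mB' _; apply: contraNneq B'X => <-.
case/incomparableP: (incXM) => XM MX.
apply: (N_shape_induced (component_sub compG B'G) (component_sub compG BG) MF
                        (component_sub compG XG)); split.
- rewrite properEneq B'M andbT; apply: contraNneq incBB' => ->.
  by rewrite /set_comparable BM.
- by rewrite properEneq BM andbT; apply: contraNneq MX => <-.
- by rewrite properEneq BX andbT; apply: contraNneq XM => <-.
split; rewrite 1?set_comparableC //; apply/incomparableP; split => //.
by apply: contra B'X => XB'; rewrite -(minimal_in_eq mB' XG XB') subxx.
Qed.

Lemma incomparable_maximal_sup X A' :
  X \in G -> ~~ set_comparable X M -> maximal_in G A' -> X \subset A'.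
Proof.
move=> XG incXM mA'; apply/negPn/negP => XA'; apply: noN.
have [A mA XA] := maximal_in_sup XG.
have [AG A'G] := (maximal_in_mem mA, maximal_in_mem mA').
case/betweenP: (bM) => _ supM; have [MA MA'] := (supM A mA, supM A' mA').
have incAA' : ~~ set_comparable A A'.
  by apply: maximal_in_incomparable mA mA' _; apply: contraNneq XA' => <-.
case/incomparableP: (incXM) => XM MX.
apply: (N_shape_induced (component_sub compG XG) MF (component_sub compG AG)
                        (component_sub compG A'G)); split.
- by rewrite properEneq XA andbT; apply: contraNneq MX => ->.
- by rewrite properEneq MA andbT; apply: contraNneq XM => ->.
- rewrite properEneq MA' andbT; apply: contraNneq incAA' => <-.
  by rewrite /set_comparable MA orbT.
split => //; apply/incomparableP; split => //.
by apply: contra XA' => A'X; rewrite (maximal_in_eq mA' XG A'X) subxx.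
Qed.

Lemma incomparable_between X : X \in G -> ~~ set_comparable X M -> between G X.
Proof.
move=> XG incXM; apply/betweenP; split => Y mY.
  exact: incomparable_minimal_sub mY.
exact: incomparable_maximal_sup mY.
Qed.

Lemma between_union_between : between G V.
Proof.
apply/betweenP; split => [B mB | A]; last exact: between_union_sub_maximal.
case/betweenP: bM => /(_ B mB) BM _.
exact: subset_trans BM (sub_between_union MF bM).
Qed.

Lemma sub_maximal_sub_between_union X :
  X \in F -> X != set0 -> (forall A, maximal_in G A -> X \subset A) -> X \subset V.
Proof.
move=> XF X0 XA; have [A mA] := component_maximal compG.
have XG : X \in G := component_mem compG XF X0 (maximal_in_mem mA) (XA A mA).
have [/orP[XM | MX] | incXM] := boolP (set_comparable X M).
- exact: subset_trans XM (sub_between_union MF bM).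
- apply: sub_between_union XF _; apply/betweenP; split => // B mB.
  by case/betweenP: bM => /(_ B mB) BM _; apply: subset_trans BM MX.
- exact: sub_between_union XF (incomparable_between XG incXM).
Qed.

Lemma between_union_not_N_c a b d :
  a \in F -> b \in F -> d \in F -> ~ N_shape a b V d.
Proof.
move=> aF bF dF [aV bV bd [ab ad /incomparableP[Vd dV]]].
suff: d \subset V by rewrite (negbTE dV).
apply: (sub_maximal_sub_between_union dF).
  by apply: contraNneq dV => ->; apply: sub0set.
move=> A mA; apply/negPn/negP => dA; apply: noN.
have VA := between_union_sub_maximal F mA.
have AF := component_sub compG (maximal_in_mem mA).
apply: (N_shape_induced aF bF AF dF); split => //.
- exact: proper_sub_trans aV VA.
- exact: proper_sub_trans bV VA.
split => //; apply/incomparableP; split => //.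
by apply: contra Vd => Ad; apply: subset_trans VA Ad.
Qed.

Lemma between_union_not_N_d a b c :
  a \in F -> b \in F -> c \in F -> ~ N_shape a b c V.
Proof.
move=> aF bF cF [ac bc bV [ab /incomparableP[aV Va] /incomparableP[_ Vc]]].
suff: a \subset V by rewrite (negbTE aV).
apply: (sub_maximal_sub_between_union aF).
  by apply: contraNneq aV => ->; apply: sub0set.
move=> A mA; apply/negPn/negP => aA; apply: noN.
have VA := between_union_sub_maximal F mA.
have AF := component_sub compG (maximal_in_mem mA).
apply: (N_shape_induced aF bF cF AF); split => //.
  exact: proper_sub_trans bV VA.
split => //; apply/incomparableP; split.
- by [].
- by apply: contra Va => Aa; apply: subset_trans VA Aa.
- by apply: contra aA => cA; apply: subset_trans (proper_sub ac) cA.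
- by apply: contra Vc => Ac; apply: subset_trans VA Ac.
Qed.

Lemma between_union_mem :
  (forall S, S \notin F -> contains_induced_N (S |: F)) -> V \in F.
Proof.
move=> satF; apply/negPn/negP => VF.
have sPF T : (T \in F) && between G T -> T \in F by case/andP.
case: (induced_N_setU1 noN (satF _ VF)) => -[x [y [z [[xF yF zF]]]]].
- exact: (union_not_N_a (P := fun T => (T \in F) && between G T) noN sPF xF yF zF).
- exact: (union_not_N_b (P := fun T => (T \in F) && between G T) noN sPF xF yF zF).
- exact: between_union_not_N_c xF yF zF.
- exact: between_union_not_N_d xF yF zF.
Qed.

End Saturated.

End NSaturated.

Theorem lemma2p6 (n : nat) (F G : {set {set 'I_n}}) (M : {set 'I_n}) :
  0 < n ->
  N_saturated F ->
  is_component F G ->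
  M \in F ->
  between G M ->
  (forall M' : {set 'I_n}, M' \in F -> between G M' -> M \subset M' -> M' = M) ->
  forall X, X \in G -> set_comparable X M.
Proof.
move=> _ [noN satF] compG MF bM maxM X XG; apply/negPn/negP => incXM.
have VF := between_union_mem noN compG MF bM satF.
have eqVM := maxM _ VF (between_union_between MF bM) (sub_between_union MF bM).
have bX := incomparable_between noN compG MF bM XG incXM.
have XV := sub_between_union (component_sub compG XG) bX.
by case/incomparableP: incXM; rewrite -eqVM XV.
Qed.
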